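(* Let $r\in\mathbb{N}$, $d\in(0,\pi]$ and $\lambda\in(0,d/3]$. Then $$\|\mathcal{E}_{r,d,\lambda}-\mathcal{E}_{r,d}\|\le c_5\lambda,$$ where $c_5>0$ depends only on $r$.
   Context: Let $\gamma_d:=1-d/\pi$. $\mathcal{E}_{r,d}$ denotes the $2\pi$-periodic function with $\mathcal{E}_{r,d}\in C^{r-1}(\mathbb{R})$, $\int_{-\pi}^{\pi}\mathcal{E}_{r,d}(x)\,dx=0$, and $\mathcal{E}_{r,d}^{(r)}(x)=\operatorname{sign}x-\gamma_d$ for $x\in(-d,2\pi-d)\setminus\{0\}$. Fix $S\in C^\infty(\mathbb{R})$, a monotone odd function with $S(x)=\operatorname{sign}x$ for $|x|\ge 1$. Define $\tilde S_{\lambda,d}(x):=S\big((x-2\lambda)/\lambda\big)$ for $x\in[0,2\pi-d]$ and $\tilde S_{\lambda,d}(x):=-S\big((x-2\lambda+d)/\lambda\big)$ for $x\in[-d,0]$, and $S_{\lambda,d}(x):=\tilde S_{\lambda,d}(x)-\gamma_d$ for $x\in[-d,2\pi-d]$. Then $\mathcal{E}_{r,d,\lambda}$ denotes the $2\pi$-periodic function in $C^\infty(\mathbb{R})$ with $\int_{-\pi}^{\pi}\mathcal{E}_{r,d,\lambda}(x)\,dx=0$ and $\mathcal{E}_{r,d,\lambda}^{(r)}(x)=S_{\lambda,d}(x)$ for $x\in[-d,2\pi-d]$. For a $2\pi$-periodic continuous $g$, $\|g\|=\max_{x\in\mathbb{R}}|g(x)|$. *)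

From Stdlib Require Import Reals.
From Coquelicot Require Import Coquelicot.
Open Scope R_scope.

Definition sgn (x : R) : R :=
  if Rlt_dec 0 x then 1 else if Rlt_dec x 0 then -1 else 0.

Definition gamma_d (d : R) : R := 1 - d / PI.

Definition periodic2pi (f : R -> R) : Prop := forall x, f (x + 2 * PI) = f x.

Definition Ck (k : nat) (f : R -> R) : Prop :=
  (forall j x, (j <= k)%nat -> ex_derive_n f j x) /\
  (forall x, continuous (Derive_n f k) x).

Definition Cinf (f : R -> R) : Prop := forall n x, ex_derive_n f n x.

Definition good_S (S : R -> R) : Prop :=
  Cinf S /\
  ((forall x y, x <= y -> S x <= S y) \/ (forall x y, x <= y -> S y <= S x)) /\
  (forall x, S (- x) = - S x) /\
  (forall x, 1 <= Rabs x -> S x = sgn x).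

(* \tilde S_{lambda,d} on [-d, 2pi - d] *)
Definition Stilde (S : R -> R) (lam d x : R) : R :=
  if Rle_dec 0 x then S ((x - 2 * lam) / lam)
  else - S ((x - 2 * lam + d) / lam).

Definition S_ld (S : R -> R) (lam d x : R) : R := Stilde S lam d x - gamma_d d.

Definition is_E (r : nat) (d : R) (E : R -> R) : Prop :=
  periodic2pi E /\
  Ck (r - 1) E /\
  RInt E (- PI) PI = 0 /\
  (forall x, - d < x < 2 * PI - d -> x <> 0 ->
     is_derive_n E r x (sgn x - gamma_d d)).

Definition is_E_smooth (S : R -> R) (r : nat) (d lam : R) (E : R -> R) : Prop :=
  periodic2pi E /\
  Cinf E /\
  RInt E (- PI) PI = 0 /\
  (forall x, - d <= x <= 2 * PI - d -> is_derive_n E r x (S_ld S lam d x)).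

(* Let h_k := E_{r,d,lam}^(k) - E_{r,d}^(k) for k <= r - 1.  The derivative of
   h_{r-1} is S_{lam,d} - (sign - gamma_d): it is bounded by 2 and vanishes
   except on the two windows (-d, -d + 3 lam) and (0, 3 lam), so h_{r-1}
   oscillates by at most 12 lam.  Every h_k vanishes somewhere or has mean zero
   (h_k = h_{k-1}' with h_{k-1} periodic, resp. k = 0), so sup |h_k| is at most
   its oscillation, which is at most 2 pi sup |h_{k+1}|.  Hence
   |h_0| <= 12 (2 pi)^(r-1) lam. *)

From Stdlib Require Import Reals Lra Lia ZArith.
From Coquelicot Require Import Coquelicot.
Open Scope R_scope.

Lemma periodic2pi_add_nat f n x : periodic2pi f -> f (x + 2 * PI * INR n) = f x.
Proof.
  intros Hf; induction n as [|n IH].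
  - now rewrite Rmult_0_r, Rplus_0_r.
  - rewrite S_INR, <- IH, <- (Hf (x + 2 * PI * INR n)); f_equal; ring.
Qed.

Lemma periodic2pi_sub_Z f z x : periodic2pi f -> f (x - 2 * PI * IZR z) = f x.
Proof.
  intros Hf; destruct (Z_le_gt_dec 0 z) as [Hz|Hz].
  - rewrite <- (periodic2pi_add_nat f (Z.to_nat z)) by exact Hf.
    rewrite INR_IZR_INZ, Z2Nat.id by exact Hz; f_equal; ring.
  - replace (x - 2 * PI * IZR z) with (x + 2 * PI * INR (Z.to_nat (- z)))
      by (rewrite INR_IZR_INZ, Z2Nat.id, opp_IZR by lia; ring).
    apply periodic2pi_add_nat, Hf.
Qed.

Lemma periodic2pi_reduce f a x :
  periodic2pi f -> exists y, a <= y <= a + 2 * PI /\ f x = f y.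
Proof.
  intros Hf; set (t := (x - a) / (2 * PI)).
  destruct (base_Int_part t) as [Hlo Hhi].
  exists (x - 2 * PI * IZR (Int_part t)); split.
  - assert (HPI := PI_RGT_0).
    assert (Ht : x - a = 2 * PI * t) by (unfold t; field; lra).
    split; nra.
  - symmetry; apply periodic2pi_sub_Z, Hf.
Qed.

Lemma periodic2pi_Derive_n f k : periodic2pi f -> periodic2pi (Derive_n f k).
Proof.
  intros Hf x; rewrite <- Derive_n_comp_trans.
  apply Derive_n_ext; intros y; apply Hf.
Qed.

Lemma Rabs_sub_le_of_derive_bound f f' a b M :
  0 <= M ->
  (forall x, a < x < b -> is_derive f x (f' x)) ->
  (forall x, a < x < b -> Rabs (f' x) <= M) ->
  (forall x, a <= x <= b -> continuous f x) ->
  forall u v, a <= u -> u <= v -> v <= b -> Rabs (f v - f u) <= M * (v - u).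
Proof.
  intros HM Hd Hb Hc u v Hau Huv Hvb.
  (* MVT_gen may pick an endpoint, where [f'] is unconstrained; clamping [f']
     to [[-M, M]] changes nothing inside. *)
  set (g := fun t => Rmax (- M) (Rmin M (f' t))).
  destruct (MVT_gen f u v g) as [c [_ Hc']].
  - intros t Ht; rewrite Rmin_left, Rmax_right in Ht by lra.
    assert (Hg : g t = f' t).
    { destruct (proj1 (Rabs_le_between _ _) (Hb t ltac:(lra))).
      unfold g; rewrite Rmin_right, Rmax_right by lra; reflexivity. }
    rewrite Hg; apply Hd; lra.
  - intros t Ht; rewrite Rmin_left, Rmax_right in Ht by lra.
    apply continuity_pt_filterlim, Hc; lra.
  - rewrite Hc', Rabs_mult, (Rabs_right (v - u)) by lra.
    apply Rmult_le_compat_r; [lra|].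
    apply Rabs_le; split; [apply Rmax_l|].
    apply Rmax_lub; [lra|apply Rmin_l].
Qed.

Lemma eq_of_derive_0 f f' a b :
  (forall x, a < x < b -> is_derive f x (f' x)) ->
  (forall x, a < x < b -> f' x = 0) ->
  (forall x, a <= x <= b -> continuous f x) ->
  forall u v, a <= u -> u <= v -> v <= b -> f v = f u.
Proof.
  intros Hd H0 Hc u v Hau Huv Hvb.
  assert (Hle : Rabs (f v - f u) <= 0 * (v - u)).
  { apply (Rabs_sub_le_of_derive_bound f f' a b); auto; [lra|].
    intros x Hx; rewrite H0, Rabs_R0 by exact Hx; lra. }
  rewrite Rmult_0_l in Hle.
  pose proof (Rabs_pos (f v - f u)).
  apply Rminus_diag_uniq, Rabs_eq_0; lra.
Qed.

Lemma periodic2pi_oscillation_le f f' M :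
  periodic2pi f -> (forall x, is_derive f x (f' x)) ->
  (forall x, Rabs (f' x) <= M) -> forall x y, Rabs (f x - f y) <= 2 * PI * M.
Proof.
  intros Hf Hd Hb x y.
  assert (HM : 0 <= M) by (pose proof (Rabs_pos (f' 0)); specialize (Hb 0); lra).
  assert (HPI := PI_RGT_0).
  destruct (periodic2pi_reduce f x y Hf) as [y' [Hy' ->]].
  rewrite Rabs_minus_sym.
  apply Rle_trans with (M * (y' - x)); [|nra].
  apply (Rabs_sub_le_of_derive_bound f f' x (x + 2 * PI)); auto; try lra.
  intros t _; apply ex_derive_continuous; exists (f' t); apply Hd.
Qed.

Lemma periodic2pi_derive_has_root f f' :
  periodic2pi f -> (forall x, is_derive f x (f' x)) -> exists c, f' c = 0.
Proof.
  intros Hf Hd.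
  assert (HPI := PI_RGT_0).
  destruct (MVT_gen f 0 (2 * PI) f') as [c [_ Hc]].
  - intros x _; apply Hd.
  - intros x _; apply continuity_pt_filterlim.
    apply (@ex_derive_continuous R_AbsRing R_NormedModule); exists (f' x); apply Hd.
  - exists c.
    assert (Hper : f (2 * PI) = f 0)
      by (rewrite <- (Rplus_0_l (2 * PI)) at 1; apply Hf).
    apply (Rmult_eq_reg_r (2 * PI)); lra.
Qed.

Lemma Rabs_le_of_RInt_0 f a b B :
  a < b -> (forall x, continuous f x) -> RInt f a b = 0 ->
  (forall x y, Rabs (f x - f y) <= B) -> forall x, Rabs (f x) <= B.
Proof.
  intros Hab Hc HI Hosc x.
  assert (Hf : ex_RInt f a b)
    by (apply (@ex_RInt_continuous R_CompleteNormedModule); auto).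
  assert (Hconst : forall c, RInt (fun _ => c) a b = (b - a) * c)
    by (intros c; apply (@RInt_const R_CompleteNormedModule)).
  assert (Hup := RInt_le f (fun _ => f x + B) a b ltac:(lra) Hf
                   (@ex_RInt_const R_NormedModule _ _ _)).
  assert (Hlo := RInt_le (fun _ => f x - B) f a b ltac:(lra)
                   (@ex_RInt_const R_NormedModule _ _ _) Hf).
  rewrite HI, Hconst in Hup, Hlo.
  assert (0 <= (b - a) * (f x + B)).
  { apply Hup; intros y _; destruct (proj1 (Rabs_le_between _ _) (Hosc y x)); lra. }
  assert ((b - a) * (f x - B) <= 0).
  { apply Hlo; intros y _; destruct (proj1 (Rabs_le_between _ _) (Hosc x y)); lra. }
  apply Rabs_le; split; nra.
Qed.

Section DerivativeTower.

Variables (h : nat -> R -> R) (n : nat).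
Hypothesis h_periodic : forall k, periodic2pi (h k).
Hypothesis h_continuous : forall k x, (k <= n)%nat -> continuous (h k) x.
Hypothesis h_derive : forall k x, (k < n)%nat -> is_derive (h k) x (h (S k) x).
Hypothesis h_mean_0 : RInt (h 0%nat) (- PI) PI = 0.

Lemma tower_Rabs_le_oscillation k B :
  (k <= n)%nat -> (forall x y, Rabs (h k x - h k y) <= B) ->
  forall x, Rabs (h k x) <= B.
Proof.
  intros Hk Hosc x; destruct k as [|k].
  - apply (Rabs_le_of_RInt_0 (h 0%nat) (- PI) PI); auto.
    pose proof PI_RGT_0; lra.
  - destruct (periodic2pi_derive_has_root (h k) (h (S k))) as [c Hc];
      [apply h_periodic | intros y; apply h_derive; lia |].
    rewrite <- (Rminus_0_r (h (S k) x)), <- Hc; apply Hosc.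
Qed.

Lemma tower_Rabs_le B :
  (forall x y, Rabs (h n x - h n y) <= B) ->
  forall x, Rabs (h 0%nat x) <= B * (2 * PI) ^ n.
Proof.
  intros Hosc.
  assert (Hj : forall j x, (j <= n)%nat -> Rabs (h (n - j)%nat x) <= B * (2 * PI) ^ j).
  { induction j as [|j IH]; intros x Hj.
    - rewrite Nat.sub_0_r, pow_O, Rmult_1_r.
      apply tower_Rabs_le_oscillation; auto.
    - apply tower_Rabs_le_oscillation; [lia|]; intros u v.
      replace (B * (2 * PI) ^ S j) with (2 * PI * (B * (2 * PI) ^ j)) by (simpl; ring).
      apply (periodic2pi_oscillation_le _ (h (n - j)%nat)); auto.
      + intros y; replace (n - j)%nat with (S (n - S j)) by lia; apply h_derive; lia.
      + intros y; apply IH; lia. }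
  intros x; specialize (Hj n x (le_n n)); rewrite Nat.sub_diag in Hj; exact Hj.
Qed.

End DerivativeTower.

Lemma periodic2pi_oscillation_of_localized_derive h D a l M :
  periodic2pi h -> (forall x, continuous h x) ->
  0 <= M -> 0 <= l -> a + l <= 0 -> l <= a + 2 * PI ->
  (forall x, a < x < a + 2 * PI -> x <> 0 -> is_derive h x (D x)) ->
  (forall x, a < x < a + 2 * PI -> x <> 0 -> Rabs (D x) <= M) ->
  (forall x, a + l < x < 0 \/ l < x < a + 2 * PI -> D x = 0) ->
  forall x, Rabs (h x - h a) <= M * l.
Proof.
  intros Hper Hc HM Hl Hal Hla Hd Hb H0 x.
  assert (Hbump_left : forall y, a <= y <= a + l -> Rabs (h y - h a) <= M * l).
  { intros y Hy; apply Rle_trans with (M * (y - a)); [|nra].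
    apply (Rabs_sub_le_of_derive_bound h D a (a + l));
      [exact HM | intros t Ht; apply Hd; lra | intros t Ht; apply Hb; lra
      | intros t _; apply Hc | lra..]. }
  assert (Hflat_left : forall y, a + l <= y <= 0 -> h y = h (a + l)).
  { intros y Hy; apply (eq_of_derive_0 h D (a + l) 0);
      [intros t Ht; apply Hd; lra | intros t Ht; apply H0; lra
      | intros t _; apply Hc | lra..]. }
  assert (Hbump_right : forall y, 0 <= y <= l -> Rabs (h l - h y) <= M * l).
  { intros y Hy; apply Rle_trans with (M * (l - y)); [|nra].
    apply (Rabs_sub_le_of_derive_bound h D 0 l);
      [exact HM | intros t Ht; apply Hd; lra | intros t Ht; apply Hb; lra
      | intros t _; apply Hc | lra..]. }
  assert (Hflat_right : forall y, l <= y <= a + 2 * PI -> h y = h a).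
  { intros y Hy; rewrite <- (Hper a).
    symmetry; apply (eq_of_derive_0 h D l (a + 2 * PI));
      [intros t Ht; apply Hd; lra | intros t Ht; apply H0; lra
      | intros t _; apply Hc | lra..]. }
  destruct (periodic2pi_reduce h a x Hper) as [y [Hy ->]].
  destruct (Rle_lt_dec y (a + l)); [apply Hbump_left; lra|].
  destruct (Rle_lt_dec y 0).
  { rewrite Hflat_left by lra; apply Hbump_left; lra. }
  destruct (Rle_lt_dec y l).
  { rewrite <- (Hflat_right l), Rabs_minus_sym by lra; apply Hbump_right; lra. }
  rewrite Hflat_right, Rminus_diag, Rabs_R0 by lra; nra.
Qed.

Lemma sgn_pos x : 0 < x -> sgn x = 1.
Proof. intros Hx; unfold sgn; destruct (Rlt_dec 0 x); [reflexivity | lra]. Qed.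

Lemma sgn_neg x : x < 0 -> sgn x = -1.
Proof.
  intros Hx; unfold sgn.
  destruct (Rlt_dec 0 x); [lra|]; destruct (Rlt_dec x 0); [reflexivity | lra].
Qed.

Lemma good_S_eq_1 S y : good_S S -> 1 <= y -> S y = 1.
Proof.
  intros [_ [_ [_ HS]]] Hy.
  rewrite HS, sgn_pos by (rewrite ?Rabs_right; lra); reflexivity.
Qed.

Lemma good_S_Rabs_le_1 S x : good_S S -> Rabs (S x) <= 1.
Proof.
  intros HS; pose proof HS as [_ [Hmono [Hodd _]]].
  set (y := Rabs x + 1).
  assert (Hy : 1 <= y) by (pose proof (Rabs_pos x); unfold y; lra).
  assert (Hxy : - y <= x <= y)
    by (pose proof (Rle_abs x); pose proof (Rabs_maj2 x); unfold y; lra).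
  assert (Hpos : S y = 1) by (apply good_S_eq_1; assumption).
  assert (Hneg : S (- y) = -1) by (rewrite Hodd, Hpos; reflexivity).
  apply Rabs_le; destruct Hmono as [Hmono|Hmono].
  - pose proof (Hmono (- y) x ltac:(lra)); pose proof (Hmono x y ltac:(lra)); lra.
  - pose proof (Hmono (- y) x ltac:(lra)); pose proof (Hmono x y ltac:(lra)); lra.
Qed.

Lemma S_ld_sub_jump_Rabs_le S lam d x :
  good_S S -> x <> 0 -> Rabs (S_ld S lam d x - (sgn x - gamma_d d)) <= 2.
Proof.
  intros HS Hx; unfold S_ld, Stilde.
  destruct (Rle_dec 0 x) as [Hx0|Hx0].
  - rewrite sgn_pos by lra.
    destruct (proj1 (Rabs_le_between _ _) (good_S_Rabs_le_1 S ((x - 2 * lam) / lam) HS)).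
    apply Rabs_le; lra.
  - rewrite sgn_neg by lra.
    destruct (proj1 (Rabs_le_between _ _) (good_S_Rabs_le_1 S ((x - 2 * lam + d) / lam) HS)).
    apply Rabs_le; lra.
Qed.

Lemma S_ld_sub_jump_eq_0 S lam d x :
  good_S S -> 0 < lam -> 3 * lam <= x \/ 3 * lam - d <= x < 0 ->
  S_ld S lam d x - (sgn x - gamma_d d) = 0.
Proof.
  intros HS Hlam Hx; unfold S_ld, Stilde.
  destruct (Rle_dec 0 x) as [Hx0|Hx0].
  - rewrite sgn_pos, (good_S_eq_1 S ((x - 2 * lam) / lam))
      by first [assumption | lra | apply Rle_div_r; lra]; ring.
  - rewrite sgn_neg, (good_S_eq_1 S ((x - 2 * lam + d) / lam))
      by first [assumption | lra | apply Rle_div_r; lra]; ring.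
Qed.

Lemma Ck_continuous_Derive_n n k f x :
  Ck n f -> (k <= n)%nat -> continuous (Derive_n f k) x.
Proof.
  intros [Hex Hc] Hk; destruct (Nat.eq_dec k n) as [->|Hne]; [apply Hc|].
  apply (@ex_derive_continuous R_AbsRing R_NormedModule), (Hex (S k)); lia.
Qed.

Lemma Ck_is_derive_Derive_n n k f x :
  Ck n f -> (k < n)%nat -> is_derive (Derive_n f k) x (Derive_n f (S k) x).
Proof. intros [Hex _] Hk; apply Derive_correct, (Hex (S k)); lia. Qed.

Lemma Cinf_Ck n f : Cinf f -> Ck n f.
Proof.
  intros Hf; split; [intros j x _; apply Hf|].
  intros x; apply (@ex_derive_continuous R_AbsRing R_NormedModule), (Hf (S n)).
Qed.

Lemma Ck_periodic2pi_sub_Rabs_le f g n B :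
  Ck n f -> Ck n g -> periodic2pi f -> periodic2pi g ->
  RInt f (- PI) PI = RInt g (- PI) PI ->
  (forall x y, Rabs ((Derive_n f n x - Derive_n g n x)
                     - (Derive_n f n y - Derive_n g n y)) <= B) ->
  forall x, Rabs (f x - g x) <= B * (2 * PI) ^ n.
Proof.
  intros Hf Hg Hfp Hgp Hmean Hosc.
  apply (tower_Rabs_le (fun k y => Derive_n f k y - Derive_n g k y)); auto.
  - intros k y.
    rewrite (periodic2pi_Derive_n f k Hfp y), (periodic2pi_Derive_n g k Hgp y).
    reflexivity.
  - intros k y Hk; apply (continuous_minus (Derive_n f k) (Derive_n g k));
      apply (Ck_continuous_Derive_n n); assumption.
  - intros k y Hk; apply (is_derive_minus (Derive_n f k) (Derive_n g k));
      apply (Ck_is_derive_Derive_n n); assumption.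
  - assert (Hint : forall u, Ck n u -> ex_RInt u (- PI) PI).
    { intros u Hu; apply (@ex_RInt_continuous R_CompleteNormedModule).
      intros y _; apply (Ck_continuous_Derive_n n 0 u y Hu); lia. }
    change (RInt (fun y => minus (f y) (g y)) (- PI) PI = 0).
    rewrite (@RInt_minus R_CompleteNormedModule), Hmean by auto.
    apply Rminus_diag.
Qed.

Lemma is_E_smooth_sub_is_E_oscillation S r d lam E El :
  good_S S -> (1 <= r)%nat -> 0 < d <= PI -> 0 < lam <= d / 3 ->
  is_E r d E -> is_E_smooth S r d lam El ->
  forall u v, Rabs ((Derive_n El (r - 1) u - Derive_n E (r - 1) u)
                    - (Derive_n El (r - 1) v - Derive_n E (r - 1) v)) <= 12 * lam.
Proof.
  intros HS Hr Hd Hlam [EP [ECk [_ ED]]] [ElP [ElC [_ ElD]]].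
  destruct r as [|n]; [lia|]; rewrite Nat.sub_succ, Nat.sub_0_r in ECk |- *.
  set (h := fun y => Derive_n El n y - Derive_n E n y).
  assert (Hjump : forall u, Rabs (h u - h (- d)) <= 2 * (3 * lam)).
  { pose proof PI_RGT_0.
    apply (periodic2pi_oscillation_of_localized_derive
             h (fun y => S_ld S lam d y - (sgn y - gamma_d d))); try lra.
    - intros y; unfold h.
      rewrite (periodic2pi_Derive_n El n ElP y), (periodic2pi_Derive_n E n EP y).
      reflexivity.
    - intros y; apply (continuous_minus (Derive_n El n) (Derive_n E n)).
      + apply (Ck_continuous_Derive_n n); [apply Cinf_Ck, ElC | lia].
      + apply (Ck_continuous_Derive_n n); [exact ECk | lia].
    - intros y Hy Hy0; apply (is_derive_minus (Derive_n El n) (Derive_n E n)).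
      + apply ElD; lra.
      + apply ED; [lra | exact Hy0].
    - intros y _ Hy0; apply S_ld_sub_jump_Rabs_le; assumption.
    - intros y Hy; apply S_ld_sub_jump_eq_0; [assumption | lra | lra]. }
  intros u v.
  destruct (proj1 (Rabs_le_between _ _) (Hjump u)).
  destruct (proj1 (Rabs_le_between _ _) (Hjump v)).
  apply Rabs_le; unfold h in *; lra.
Qed.

Theorem lemma5p2 :
  forall S : R -> R, good_S S ->
  forall r : nat, (1 <= r)%nat ->
  exists c5 : R, 0 < c5 /\
    forall (d lam : R) (E El : R -> R),
      0 < d <= PI -> 0 < lam <= d / 3 ->
      is_E r d E -> is_E_smooth S r d lam El ->
      forall x : R, Rabs (El x - E x) <= c5 * lam.
Proof.
  intros S HS r Hr.
  exists (12 * (2 * PI) ^ (r - 1)); split.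
  { apply Rmult_lt_0_compat, pow_lt; pose proof PI_RGT_0; lra. }
  intros d lam E El Hd Hlam HE HEl x.
  replace (12 * (2 * PI) ^ (r - 1) * lam) with (12 * lam * (2 * PI) ^ (r - 1)) by ring.
  pose proof HE as [EP [ECk [EI _]]]; pose proof HEl as [ElP [ElC [ElI _]]].
  apply (Ck_periodic2pi_sub_Rabs_le El E (r - 1)); auto.
  - apply Cinf_Ck, ElC.
  - rewrite ElI, EI; reflexivity.
  - apply (is_E_smooth_sub_is_E_oscillation S r d); assumption.
Qed.
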